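(* Let $(X,\le)$ be a non-empty strictly inductive poset, let $f:X\to X$ and $a_0\in X$, let $(a_k)_k$ be the transfinite sequence of iterates of $f$ from $a_0$, and let $A=\{a_k\mid k \text{ an ordinal}\}$. Suppose $a_0\le f(a_0)$ and that for all $x,y\in A$, if $x\le f(x)\le y$ then $f(x)\le f(y)$. Then the sequence is monotone: $a_k\le a_l$ whenever $k<l$.
   Context: A poset is strictly inductive if every non-empty chain (totally ordered subset) has a least upper bound $\mathrm{lub}$ in $X$. The transfinite iterates are defined by $a_0$ given, $a_{k+1}=f(a_k)$, and $a_l=\mathrm{lub}\{a_k\mid k<l\}$ for limit ordinals $l$. *)

Definition partial_order {X : Type} (le : X -> X -> Prop) : Prop :=
  (forall x, le x x) /\
  (forall x y, le x y -> le y x -> x = y) /\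
  (forall x y z, le x y -> le y z -> le x z).

Definition is_chain {X : Type} (le : X -> X -> Prop) (C : X -> Prop) : Prop :=
  forall x y, C x -> C y -> le x y \/ le y x.

Definition is_upper_bound {X : Type} (le : X -> X -> Prop) (C : X -> Prop) (u : X) : Prop :=
  forall x, C x -> le x u.

Definition is_lub {X : Type} (le : X -> X -> Prop) (C : X -> Prop) (u : X) : Prop :=
  is_upper_bound le C u /\ (forall v, is_upper_bound le C v -> le u v).

Definition strictly_inductive {X : Type} (le : X -> X -> Prop) : Prop :=
  forall C : X -> Prop, (exists x, C x) -> is_chain le C -> exists u, is_lub le C u.

Definition well_order {I : Type} (lt : I -> I -> Prop) : Prop :=
  (forall i, ~ lt i i) /\
  (forall i j k, lt i j -> lt j k -> lt i k) /\
  (forall i j, lt i j \/ i = j \/ lt j i) /\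
  well_founded lt.

Definition is_zero {I : Type} (lt : I -> I -> Prop) (i : I) : Prop :=
  forall j, ~ lt j i.

Definition is_succ_of {I : Type} (lt : I -> I -> Prop) (i j : I) : Prop :=
  lt i j /\ (forall m, ~ (lt i m /\ lt m j)).

Definition is_limit {I : Type} (lt : I -> I -> Prop) (l : I) : Prop :=
  ~ is_zero lt l /\ (forall i, ~ is_succ_of lt i l).

Definition transfinite_iterates {X I : Type} (le : X -> X -> Prop)
    (lt : I -> I -> Prop) (f : X -> X) (a0 : X) (a : I -> X) : Prop :=
  (forall i, is_zero lt i -> a i = a0) /\
  (forall i j, is_succ_of lt i j -> a j = f (a i)) /\
  (forall l, is_limit lt l -> is_lub le (fun x => exists k, lt k l /\ x = a k) (a l)).

(** By well-founded induction on the index one proves simultaneously that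
    every iterate is inflationary, [a_l <= f a_l], and lies above all earlier
    iterates.  At a successor [l = i + 1] the hypothesis on [f], applied to
    [x = y = a_i], gives [a_l = f a_i <= f a_l].  At a limit [l], every [a_k]
    with [k < l] satisfies [a_k <= f a_k = a_(k+1) <= a_l], so the hypothesis
    yields [a_k <= f a_k <= f a_l]; hence [f a_l] bounds the chain whose least
    upper bound is [a_l]. *)

From Stdlib Require Import Classical.

Section WellOrderedIndices.

Context {I : Type} {lt : I -> I -> Prop}.
Hypothesis lt_wo : well_order lt.

Lemma exists_succ_le {k m : I} :
  lt k m -> exists s, is_succ_of lt k s /\ (s = m \/ lt s m).
Proof.
  destruct lt_wo as [_ [lt_trans [_ lt_wf]]].
  induction m as [m IH] using (well_founded_induction lt_wf); intro lt_km.
  destruct (classic (exists n, lt k n /\ lt n m)) as [[n [lt_kn lt_nm]] | no_between].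
  - destruct (IH n lt_nm lt_kn) as [s [succ_ks [-> | lt_sn]]].
    + exists n; auto.
    + exists s; eauto.
  - exists m; split; [split; [exact lt_km |] |]; auto.
    intros n between; apply no_between; exists n; exact between.
Qed.

Lemma lt_succ_le {i l k : I} : is_succ_of lt i l -> lt k l -> k = i \/ lt k i.
Proof.
  destruct lt_wo as [_ [_ [lt_total _]]].
  intros [_ nothing_between] lt_kl.
  destruct (lt_total k i) as [lt_ki | [-> | lt_ik]]; auto.
  exfalso; exact (nothing_between k (conj lt_ik lt_kl)).
Qed.

Lemma zero_or_succ_or_limit (l : I) :
  is_zero lt l \/ (exists i, is_succ_of lt i l) \/ is_limit lt l.
Proof.
  destruct (classic (is_zero lt l)) as [zero_l | nonzero_l]; auto.
  destruct (classic (exists i, is_succ_of lt i l)) as [succ_l | nonsucc_l]; auto.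
  do 2 right; split; [exact nonzero_l |].
  intros i succ_il; apply nonsucc_l; exists i; exact succ_il.
Qed.

End WellOrderedIndices.

Section MonotoneIterates.

Context {X : Type} {le : X -> X -> Prop} {I : Type} {lt : I -> I -> Prop}.
Context {f : X -> X} {a0 : X} {a : I -> X}.

Hypothesis le_po : partial_order le.
Hypothesis lt_wo : well_order lt.
Hypothesis a_iter : transfinite_iterates le lt f a0 a.
Hypothesis a0_infl : le a0 (f a0).
Hypothesis f_mono_on_iterates :
  forall x y, (exists k, x = a k) -> (exists k, y = a k) ->
    le x (f x) -> le (f x) y -> le (f x) (f y).

Definition inflationary_and_above_earlier (l : I) : Prop :=
  le (a l) (f (a l)) /\ (forall k, lt k l -> le (a k) (a l)).

Lemma inflationary_and_above_earlier_zero {l : I} :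
  is_zero lt l -> inflationary_and_above_earlier l.
Proof.
  intro zero_l; destruct a_iter as [a_zero _].
  split; [rewrite (a_zero l zero_l); exact a0_infl |].
  intros k lt_kl; exfalso; exact (zero_l k lt_kl).
Qed.

Lemma inflationary_and_above_earlier_succ {i l : I} :
  is_succ_of lt i l -> inflationary_and_above_earlier i ->
  inflationary_and_above_earlier l.
Proof.
  intros succ_il [infl_i above_i].
  destruct le_po as [le_refl [_ le_trans]].
  destruct a_iter as [_ [a_succ _]].
  pose proof (a_succ i l succ_il) as a_l.
  split.
  - rewrite a_l; apply f_mono_on_iterates; eauto.
  - intros k lt_kl; rewrite a_l.
    destruct (lt_succ_le lt_wo succ_il lt_kl) as [-> | lt_ki]; [exact infl_i |].
    exact (le_trans _ _ _ (above_i k lt_ki) infl_i).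
Qed.

Lemma inflationary_and_above_earlier_limit {l : I} :
  is_limit lt l -> (forall k, lt k l -> inflationary_and_above_earlier k) ->
  inflationary_and_above_earlier l.
Proof.
  intros limit_l IH.
  destruct le_po as [_ [_ le_trans]].
  destruct a_iter as [_ [a_succ a_limit]].
  destruct (a_limit l limit_l) as [a_l_ub a_l_least].
  split; [| intros k lt_kl; apply a_l_ub; eauto].
  apply a_l_least; intros x [k [lt_kl ->]].
  destruct (exists_succ_le lt_wo lt_kl) as [s [succ_ks [-> | lt_sl]]].
  - exfalso; exact (proj2 limit_l k succ_ks).
  - destruct (IH k lt_kl) as [infl_k _].
    assert (f_ak_le_al : le (f (a k)) (a l)).
    { rewrite <- (a_succ k s succ_ks); apply a_l_ub; eauto. }
    exact (le_trans _ _ _ infl_k (f_mono_on_iterates _ _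
             (ex_intro _ k eq_refl) (ex_intro _ l eq_refl) infl_k f_ak_le_al)).
Qed.

Lemma inflationary_and_above_earlier_all (l : I) :
  inflationary_and_above_earlier l.
Proof.
  destruct lt_wo as [_ [_ [_ lt_wf]]].
  induction l as [l IH] using (well_founded_induction lt_wf).
  destruct (zero_or_succ_or_limit (lt := lt) l) as [zero_l | [[i succ_il] | limit_l]].
  - exact (inflationary_and_above_earlier_zero zero_l).
  - exact (inflationary_and_above_earlier_succ succ_il (IH i (proj1 succ_il))).
  - exact (inflationary_and_above_earlier_limit limit_l IH).
Qed.

End MonotoneIterates.

Theorem mainTheorem2 (X : Type) (le : X -> X -> Prop) (I : Type)
    (lt : I -> I -> Prop) (f : X -> X) (a0 : X) (a : I -> X) :
  partial_order le ->
  inhabited X ->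
  strictly_inductive le ->
  well_order lt ->
  transfinite_iterates le lt f a0 a ->
  le a0 (f a0) ->
  (forall x y, (exists k, x = a k) -> (exists k, y = a k) ->
     le x (f x) -> le (f x) y -> le (f x) (f y)) ->
  forall k l, lt k l -> le (a k) (a l).
Proof.
  intros le_po _ _ lt_wo a_iter a0_infl f_mono k l lt_kl.
  exact (proj2 (inflationary_and_above_earlier_all le_po lt_wo a_iter a0_infl f_mono l) k lt_kl).
Qed.
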